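(* Let $b\ge 1$ and, for $i\in[b]=\{1,\dots,b\}$, let $\mathcal X_i=\mathbb R^{m_i\times n_i}$ be equipped with the trace inner product $\langle X_i,Y_i\rangle_{(i)}=\operatorname{tr}(X_i^\top Y_i)$ and an arbitrary norm $\|\cdot\|_{(i)}$ with dual norm $\|Y_i\|_{(i)\star}=\sup_{\|Z_i\|_{(i)}\le 1}\langle Y_i,Z_i\rangle_{(i)}$. Let $\mathcal X=\mathcal X_1\times\cdots\times\mathcal X_b$ with elements $X=[X_1,\dots,X_b]$ and inner product $\langle X,Y\rangle=\sum_i\langle X_i,Y_i\rangle_{(i)}$. Let $f:\mathcal X\to\mathbb R$ be continuously differentiable, with $i$-th gradient block $\nabla_i f(X)\in\mathcal X_i$, and assume there is $f^\star\in\mathbb R$ with $f(X)\ge f^\star$ for all $X\in\mathcal X$. Let $p_1,\dots,p_b\ge 0$ with $\sum_{i=1}^b p_i=1$ and $p_1>0$, and let $\mathcal D$ be the distribution of the random set $\{s,\dots,b\}$ where $s\in[b]$ is drawn with $\Pr(s=i)=p_i$ (randomized progressive training). Assume $f$ is $\operatorname{supp}(\mathcal D)$-layer-wise $L^0$-smooth: there are constants $L^0_{i,S}\ge 0$ ($i\in[b]$, $S\in\operatorname{supp}(\mathcal D)$), with $L^0_{i,S}=0$ for $i\notin S$, such that for every $S\in\operatorname{supp}(\mathcal D)$, all $X\in\mathcal X$ and all $\Gamma=[\Gamma_1,\dots,\Gamma_b]\in\mathcal X$ with $\Gamma_i=0$ for $i\notin S$, $$f(X+\Gamma)-f(X)-\langle\nabla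 f(X),\Gamma\rangle\le\sum_{i\in S}\frac{L^0_{i,S}}{2}\|\Gamma_i\|_{(i)}^2 .$$ Consider the iterates $\{X^k\}$ generated from $X^0\in\mathcal X$ as follows: for $k=0,1,\dots$, draw $S^k\sim\mathcal D$ independently of the past, set $X_i^{k+1}=X_i^k-\gamma_i^k(\nabla_i f(X^k))^\sharp$ for $i\in S^k$ and $X_i^{k+1}=X_i^k$ for $i\notin S^k$, with stepsizes $\gamma_i^k=1/L^0_{i,S^k}$. Then for every $K\ge 1$, $$\frac1K\sum_{k=0}^{K-1}\sum_{i=1}^b\frac{w_i}{\frac1b\sum_{j=1}^b w_j}\,\mathbb E\big[\|\nabla_i f(X^k)\|_{(i)\star}^2\big]\le\frac{f(X^0)-f^\star}{K\left(\frac1b\sum_{j=1}^b w_j\right)},\qquad w_i:=\sum_{s=1}^i\frac{p_s}{2L^0_{i,\{s,\dots,b\}}}.$$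
   Context: For $G\in\mathcal X_i$, $G^\sharp$ (the sharp operator) denotes an element of $\arg\max_{Z\in\mathcal X_i}\{\langle G,Z\rangle_{(i)}-\tfrac12\|Z\|_{(i)}^2\}$. $\operatorname{supp}(\mathcal D)$ is the collection of subsets of $[b]$ having positive probability under $\mathcal D$; here it is $\{\{j,\dots,b\}:p_j>0\}$. Expectations are over the random sets $S^k$. *)

From HB Require Import structures.
From mathcomp Require Import all_boot all_order all_algebra.
From mathcomp Require Import all_classical all_reals.
Set Implicit Arguments. Unset Strict Implicit. Unset Printing Implicit Defensive.
Import Order.TTheory GRing.Theory Num.Theory.
Local Open Scope classical_set_scope.
Local Open Scope ring_scope.

(* Block space X = X_1 x ... x X_b, X_i = R^{m_i x n_i}; blocks indexed by 'I_b
   (block i of the paper is the ordinal i-1). *)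
Definition blocks (R : realType) (b : nat) (m n : 'I_b -> nat) :=
  forall i : 'I_b, 'M[R]_(m i, n i).

Section Blocks.
Variables (R : realType) (b : nat) (m n : 'I_b -> nat).
Local Notation X := (blocks R m n).

Definition badd (x y : X) : X := fun i => x i + y i.

Definition ipb (i : 'I_b) (x y : 'M[R]_(m i, n i)) : R := \tr ((x^T) *m y).
Definition ip (x y : X) : R := \sum_(i < b) ipb (x i) (y i).

(* an auxiliary (entrywise l1) norm on X, only used to express
   Frechet differentiability and continuity *)
Definition l1 (x : X) : R :=
  \sum_(i < b) \sum_(j < m i) \sum_(k < n i) `|x i j k|.

Definition has_gradient (f : X -> R) (grad : X -> X) : Prop :=
  forall x (e : R), 0 < e -> exists2 d : R, 0 < d &
    forall h : X, l1 h < d ->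
      `|f (badd x h) - f x - ip (grad x) h| <= e * l1 h.

Definition continuousX (g : X -> X) : Prop :=
  forall x (e : R), 0 < e -> exists2 d : R, 0 < d &
    forall y : X, l1 (fun i => y i - x i) < d -> l1 (fun i => g y i - g x i) < e.

End Blocks.

Definition is_norm (R : realType) (p q : nat) (N : 'M[R]_(p, q) -> R) : Prop :=
  [/\ forall x, 0 <= N x,
      forall x, N x = 0 -> x = 0,
      forall (a : R) x, N (a *: x) = `|a| * N x &
      forall x y, N (x + y) <= N x + N y].

Definition dualn (R : realType) (p q : nat) (N : 'M[R]_(p, q) -> R)
  (Y : 'M[R]_(p, q)) : R :=
  sup [set r | exists Z : 'M[R]_(p, q), N Z <= 1 /\ r = \tr (Y^T *m Z)].

Definition is_sharp (R : realType) (p q : nat) (N : 'M[R]_(p, q) -> R)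
  (sharp : 'M[R]_(p, q) -> 'M[R]_(p, q)) : Prop :=
  forall G Z : 'M[R]_(p, q),
    \tr (G^T *m Z) - N Z ^+ 2 / 2 <= \tr (G^T *m sharp G) - N (sharp G) ^+ 2 / 2.

(* the random set {s, ..., b} (0-indexed: {s, ..., b-1}) *)
Definition tail_set (b : nat) (s : 'I_b) : {set 'I_b} := finset (fun i : 'I_b => (s <= i)%N).

Definition in_supp (R : realType) (b : nat) (p : 'I_b -> R) (S : {set 'I_b}) : Prop :=
  exists2 s : 'I_b, 0 < p s & S = tail_set s.

Definition pstep (R : realType) (b : nat) (m n : 'I_b -> nat)
  (grad : blocks R m n -> blocks R m n)
  (sharp : forall i : 'I_b, 'M[R]_(m i, n i) -> 'M[R]_(m i, n i))
  (L : 'I_b -> {set 'I_b} -> R) (x : blocks R m n) (s : 'I_b) : blocks R m n :=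
  fun i => if i \in tail_set s then x i - (1 / L i (tail_set s)) *: sharp i (grad x i)
           else x i.

Definition piter (R : realType) (b : nat) (m n : 'I_b -> nat)
  (grad : blocks R m n -> blocks R m n)
  (sharp : forall i : 'I_b, 'M[R]_(m i, n i) -> 'M[R]_(m i, n i))
  (L : 'I_b -> {set 'I_b} -> R) (x0 : blocks R m n) (ss : seq 'I_b) : blocks R m n :=
  foldl (pstep grad sharp L) x0 ss.

(* expectation of g(X^k) over i.i.d. draws s_0..s_{k-1} with P(s = i) = p i *)
Definition expect_k (R : realType) (b : nat) (m n : 'I_b -> nat)
  (p : 'I_b -> R) (grad : blocks R m n -> blocks R m n)
  (sharp : forall i : 'I_b, 'M[R]_(m i, n i) -> 'M[R]_(m i, n i))
  (L : 'I_b -> {set 'I_b} -> R) (x0 : blocks R m n) (k : nat)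
  (g : blocks R m n -> R) : R :=
  \sum_(t : k.-tuple 'I_b) (\prod_(s <- t) p s) * g (piter grad sharp L x0 t).

Definition wgt (R : realType) (b : nat) (p : 'I_b -> R)
  (L : 'I_b -> {set 'I_b} -> R) (i : 'I_b) : R :=
  \sum_(s < b | (s <= i)%N) p s / (2 * L i (tail_set s)).

From HB Require Import structures.
From mathcomp Require Import all_boot all_order all_algebra.
From mathcomp Require Import all_classical all_reals.
From mathcomp Require Import ring lra.
Import Order.TTheory GRing.Theory Num.Theory.
Local Open Scope classical_set_scope.
Local Open Scope ring_scope.

(* The sharp step maximizes the model <G, Z> - ||Z||^2 / 2, whose optimal
   value is ||G||_*^2 / 2; with stepsize 1/L this makes each updated block
   decrease the smoothness upper bound by ||grad_i f||_*^2 / (2 L_{i,S}).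
   Averaging over the draw s gives E f(X^{k+1}) <= E f(X^k) - E sum_i w_i
   ||grad_i f(X^k)||_*^2, and telescoping against f >= f^* yields the bound. *)

Lemma sum_tupleS (V : nmodType) (T : finType) (k : nat) (F : k.+1.-tuple T -> V) :
  \sum_(t : k.+1.-tuple T) F t = \sum_(x : T) \sum_(t : k.-tuple T) F (cons_tuple x t).
Proof.
rewrite pair_big /=.
have cons_bij : bijective (fun u : T * k.-tuple T => cons_tuple u.1 u.2).
  exists (fun t : k.+1.-tuple T => (thead t, behead_tuple t)).
    by case=> x t /=; congr pair; apply: val_inj.
  by case=> -[|x t] //= ?; apply: val_inj.
by rewrite (reindex _ (onW_bij _ cons_bij)).
Qed.

Section SharpOperator.
Context {R : realType} {p q : nat}.
Variables (N : 'M[R]_(p, q) -> R)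
  (sharp : 'M[R]_(p, q) -> 'M[R]_(p, q)).
Hypotheses (normN : is_norm N) (sharpN : is_sharp N sharp).

Definition sharp_value (G : 'M[R]_(p, q)) : R :=
  \tr (G^T *m sharp G) - N (sharp G) ^+ 2 / 2.

Lemma is_norm0 : N 0 = 0.
Proof.
by case: normN => _ _ NZ _; rewrite -(scale0r (0 : 'M_(p, q))) NZ normr0 mul0r.
Qed.

Lemma sharp_value_ge0 G : 0 <= sharp_value G.
Proof. by have := sharpN G 0; rewrite mulmx0 mxtrace0 is_norm0 expr0n /= mul0r subr0. Qed.

(* Compare the sharp point with the competitor t Z, t = <G, Z>. *)
Lemma sqr_trace_le_sharp_value G Z :
  N Z <= 1 -> \tr (G^T *m Z) ^+ 2 <= 2 * sharp_value G.
Proof.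
case: normN => N_ge0 _ NZ _ NZ1; set t := \tr (G^T *m Z).
have NZ2 : N Z ^+ 2 <= 1 by rewrite -(expr1n R 2) lerXn2r ?nnegrE ?N_ge0.
have := sharpN G (t *: Z).
rewrite -scalemxAr mxtraceZ NZ exprMn real_normK ?num_real // -/t -expr2.
rewrite -/(sharp_value G) => competitor.
have : t ^+ 2 * N Z ^+ 2 <= t ^+ 2 by rewrite ler_piMr ?sqr_ge0.
lra.
Qed.

Lemma sqr_dualn_le_sharp_value G : dualn N G ^+ 2 <= 2 * sharp_value G.
Proof.
set A := [set r | exists Z, N Z <= 1 /\ r = \tr (G^T *m Z)].
have A0 : A 0 by exists 0; rewrite is_norm0 mulmx0 mxtrace0.
have ubA : ubound A (Num.sqrt (2 * sharp_value G)).
  move=> _ [Z [NZ1 ->]]; apply: le_trans (ler_norm _) _.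
  by rewrite -sqrtr_sqr ler_wsqrtr // sqr_trace_le_sharp_value.
have dual_ge0 : 0 <= dualn N G by apply: ub_le_sup => //; exists (Num.sqrt (2 * sharp_value G)).
have dual_le : dualn N G <= Num.sqrt (2 * sharp_value G) by apply: ge_sup => //; exists 0.
rewrite -(sqr_sqrtr (a := 2 * sharp_value G)) ?mulr_ge0 ?sharp_value_ge0 //.
by rewrite lerXn2r ?nnegrE ?sqrtr_ge0.
Qed.

(* For L = 0 both sides vanish, since 0^-1 = 0. *)
Lemma sharp_step_decrease (L : R) G : 0 <= L ->
  \tr (G^T *m (- L^-1 *: sharp G)) + L / 2 * N (- L^-1 *: sharp G) ^+ 2
    <= - (dualn N G ^+ 2 / (2 * L)).
Proof.
case: normN => _ _ NZ _ L0.
rewrite NZ -scalemxAr mxtraceZ normrN ger0_norm ?invr_ge0 // invfM.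
have := sqr_dualn_le_sharp_value G; rewrite /sharp_value.
set T := \tr _; set M := N _; set D := dualn N G => dualD.
have [->|Lneq0] := eqVneq L 0; first by rewrite invr0; lra.
have -> : L / 2 * (L^-1 * M) ^+ 2 = L^-1 * (M ^+ 2 / 2) by field.
have : L^-1 * D ^+ 2 <= L^-1 * (2 * (T - M ^+ 2 / 2)) by rewrite ler_wpM2l ?invr_ge0.
lra.
Qed.

End SharpOperator.

Section ProgressiveTraining.
Context {R : realType} {b : nat} {m n : 'I_b -> nat}.
Variables (nrm : forall i : 'I_b, 'M[R]_(m i, n i) -> R)
  (f : blocks R m n -> R) (grad : blocks R m n -> blocks R m n)
  (p : 'I_b -> R) (L : 'I_b -> {set 'I_b} -> R)
  (sharp : forall i : 'I_b, 'M[R]_(m i, n i) -> 'M[R]_(m i, n i)).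
Hypotheses (normN : forall i, is_norm (nrm i))
  (sharpN : forall i, is_sharp (nrm i) (sharp i))
  (p_ge0 : forall i, 0 <= p i) (p_sum1 : \sum_(i < b) p i = 1)
  (L_ge0 : forall S, in_supp p S -> forall i, 0 <= L i S)
  (smooth : forall S, in_supp p S -> forall (x G : blocks R m n),
      (forall i, i \notin S -> G i = 0) ->
      f (badd x G) - f x - ip (grad x) G
        <= \sum_(i in S) L i S / 2 * nrm i (G i) ^+ 2).

Local Notation step := (pstep grad sharp L).
Local Notation E := (expect_k p grad sharp L).

Definition sqr_dual_grad (x : blocks R m n) (i : 'I_b) : R :=
  dualn (nrm i) (grad x i) ^+ 2.

Definition weighted_stationarity (x : blocks R m n) : R :=
  \sum_(i < b) wgt p L i * sqr_dual_grad x i.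

Lemma step_descent x s : 0 < p s ->
  f (step x s) <= f x - \sum_(i in tail_set s) sqr_dual_grad x i / (2 * L i (tail_set s)).
Proof.
move=> ps_gt0; set S := tail_set s.
have suppS : in_supp p S by exists s.
pose G : blocks R m n := fun i => if i \in S then - (L i S)^-1 *: sharp i (grad x i) else 0.
have -> : step x s = badd x G.
  apply: functional_extensionality_dep => i; rewrite /pstep /badd /G -/S.
  by case: ifP => _; rewrite ?addr0 // div1r scaleNr.
have G_off : forall i, i \notin S -> G i = 0 by move=> i /negbTE iS; rewrite /G iS.
have ip_on : ip (grad x) G = \sum_(i in S) ipb (grad x i) (G i).
  rewrite /ip [RHS]big_mkcond; apply: eq_bigr => i _.
  by rewrite /G; case: ifP => // _; rewrite /ipb mulmx0 mxtrace0.
have blockwise : \sum_(i in S) (ipb (grad x i) (G i) + L i S / 2 * nrm i (G i) ^+ 2)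
    <= - \sum_(i in S) sqr_dual_grad x i / (2 * L i S).
  rewrite -sumrN; apply: ler_sum => i iS; rewrite /G iS /ipb /sqr_dual_grad.
  by apply: sharp_step_decrease; [exact: normN | exact: sharpN | exact: L_ge0].
rewrite big_split /= in blockwise.
by have := smooth S suppS x G G_off; rewrite ip_on; lra.
Qed.

Lemma weighted_stationarity_by_draw x :
  weighted_stationarity x =
  \sum_(s < b) p s * \sum_(i in tail_set s) sqr_dual_grad x i / (2 * L i (tail_set s)).
Proof.
rewrite /weighted_stationarity /wgt.
under eq_bigr => i _ do rewrite big_distrl /= big_mkcond /=.
rewrite exchange_big; apply: eq_bigr => s _.
rewrite mulr_sumr [RHS]big_mkcond; apply: eq_bigr => i _.
by rewrite inE; case: ifP => _; rewrite ?mulr0 ?mul0r // mulrA mulrAC.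
Qed.

Lemma expected_step_descent x :
  \sum_(s < b) p s * f (step x s) <= f x - weighted_stationarity x.
Proof.
have -> : f x = \sum_(s < b) p s * f x by rewrite -big_distrl /= p_sum1 mul1r.
rewrite weighted_stationarity_by_draw -sumrB; apply: ler_sum => s _.
have [-> | ps_neq0] := eqVneq (p s) 0; first by rewrite !mul0r subrr.
by rewrite -mulrBr ler_wpM2l // step_descent // lt_def ps_neq0 p_ge0.
Qed.

Lemma expect_k0 x0 g : E x0 0 g = g x0.
Proof.
rewrite /expect_k (big_pred1 [tuple]) /= ?big_nil ?mul1r //.
by move=> t; apply/esym/eqP; apply: tuple0.
Qed.

Lemma expect_kS x0 k g : E x0 k.+1 g = \sum_(s < b) p s * E (step x0 s) k g.
Proof.
rewrite /expect_k sum_tupleS; apply: eq_bigr => s _.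
by rewrite mulr_sumr; apply: eq_bigr => t _; rewrite /= big_cons mulrA.
Qed.

Lemma sum_expected_stationarity_le (fstar : R) : (forall x, fstar <= f x) ->
  forall K x0, \sum_(k < K) E x0 k weighted_stationarity <= f x0 - fstar.
Proof.
move=> f_ge K; elim: K => [|K IH] x0; first by rewrite big_ord0 subr_ge0.
rewrite big_ord_recl expect_k0.
under eq_bigr => k _ do rewrite expect_kS.
rewrite exchange_big /=.
have -> : f x0 - fstar = f x0 - \sum_(s < b) p s * fstar.
  by rewrite -big_distrl /= p_sum1 mul1r.
have := expected_step_descent x0.
suff : \sum_(s < b) \sum_(k < K) p s * E (step x0 s) k weighted_stationarity
    <= \sum_(s < b) p s * f (step x0 s) - \sum_(s < b) p s * fstar by lra.
rewrite -sumrB; apply: ler_sum => s _.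
by rewrite -mulr_sumr -mulrBr ler_wpM2l.
Qed.

End ProgressiveTraining.

Lemma wgt_ge0 (R : realType) (b : nat) (p : 'I_b -> R) (L : 'I_b -> {set 'I_b} -> R) :
  (forall i, 0 <= p i) -> (forall S, in_supp p S -> forall i, 0 <= L i S) ->
  forall i, 0 <= wgt p L i.
Proof.
move=> p_ge0 L_ge0 i; apply: sumr_ge0 => s _.
have [-> | ps_neq0] := eqVneq (p s) 0; first by rewrite mul0r.
rewrite divr_ge0 ?mulr_ge0 // L_ge0 //; exists s => //.
by rewrite lt_def ps_neq0 p_ge0.
Qed.

Theorem theorem1 (R : realType) (b : nat) (m n : 'I_b -> nat)
  (nrm : forall i : 'I_b, 'M[R]_(m i, n i) -> R)
  (f : blocks R m n -> R) (grad : blocks R m n -> blocks R m n) (fstar : R)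
  (p : 'I_b -> R) (L : 'I_b -> {set 'I_b} -> R)
  (sharp : forall i : 'I_b, 'M[R]_(m i, n i) -> 'M[R]_(m i, n i))
  (x0 : blocks R m n) :
  (0 < b)%N ->
  (forall i, is_norm (nrm i)) ->
  has_gradient f grad -> continuousX grad ->
  (forall x, fstar <= f x) ->
  (forall i, 0 <= p i) -> \sum_(i < b) p i = 1 ->
  (forall i : 'I_b, nat_of_ord i = 0%N -> 0 < p i) ->
  (forall S, in_supp p S -> forall i, 0 <= L i S) ->
  (forall S, in_supp p S -> forall i, i \notin S -> L i S = 0) ->
  (forall S, in_supp p S -> forall (x G : blocks R m n),
      (forall i, i \notin S -> G i = 0) ->
      f (badd x G) - f x - ip (grad x) G
        <= \sum_(i in S) L i S / 2 * nrm i (G i) ^+ 2) ->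
  (forall i, is_sharp (nrm i) (sharp i)) ->
  forall K : nat, (0 < K)%N ->
    K%:R^-1 * \sum_(k < K) \sum_(i < b)
        wgt p L i / (b%:R^-1 * \sum_(j < b) wgt p L j)
        * expect_k p grad sharp L x0 k (fun x => dualn (nrm i) (grad x i) ^+ 2)
    <= (f x0 - fstar) / (K%:R * (b%:R^-1 * \sum_(j < b) wgt p L j)).
Proof.
move=> _ normN _ _ f_ge p_ge0 p_sum1 _ L_ge0 _ smooth sharpN K _.
set W := b%:R^-1 * \sum_(j < b) wgt p L j.
have W_ge0 : 0 <= W.
  by rewrite mulr_ge0 ?invr_ge0 ?ler0n ?sumr_ge0 // => i _; apply: wgt_ge0.
have normalize k : \sum_(i < b) wgt p L i / W
      * expect_k p grad sharp L x0 k (fun x => dualn (nrm i) (grad x i) ^+ 2)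
    = W^-1 * expect_k p grad sharp L x0 k (weighted_stationarity nrm grad p L).
  rewrite /expect_k mulr_sumr; under eq_bigr do rewrite mulr_sumr.
  rewrite exchange_big; apply: eq_bigr => t _.
  by rewrite !mulr_sumr; apply: eq_bigr => i _; rewrite /sqr_dual_grad; ring.
under eq_bigr do rewrite normalize.
have KW_ge0 : 0 <= (K%:R * W)^-1 by rewrite invr_ge0 mulr_ge0.
rewrite -mulr_sumr mulrA -invfM [X in _ <= X]mulrC ler_wpM2l //.
exact: (sum_expected_stationarity_le _ _ _ _ _ _ normN sharpN p_ge0 p_sum1 L_ge0 smooth _ f_ge).
Qed.
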